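(* Let $\Sigma^*$ be an $n\times n$ positive definite matrix with $\Omega^*=(\Sigma^* )^{-1}$ whose conditional independence structure is a tree $T^*$, let $D^*$ be a diagonal matrix with nonnegative entries, let $a$ be a leaf of $T^*$ with neighbor $b$, and let $c$ satisfy $0<c<D^*_{bb}$. Define $\Sigma^q$ by $\Sigma^q_{aa}=\Sigma^*_{aa}-\frac{1}{\Omega^*_{aa}}$, $\Sigma^q_{bb}=\Sigma^*_{bb}+c$, and $\Sigma^q_{ij}=\Sigma^*_{ij}$ for all other $(i,j)$. Then $\Sigma^q$ is a covariance (positive definite) matrix and its conditional independence structure is the tree obtained from $T^*$ by exchanging the positions of nodes $a$ and $b$.
   Context: For an $n\times n$ positive definite matrix $\Sigma$ with inverse $\Omega$, its conditional independence structure is the graph on $\{1,\dots,n\}$ with an edge $\{i,j\}$ ($i\neq j$) iff $\Omega_{ij}\neq 0$. ''Exchanging the positions of $a$ and $b$'' means applying to $T^*$ the relabeling of vertices that swaps $a$ and $b$. *)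

From HB Require Import structures.
From mathcomp Require Import all_boot all_order all_fingroup all_algebra.
Set Implicit Arguments. Unset Strict Implicit. Unset Printing Implicit Defensive.
Import Order.TTheory GRing.Theory Num.Theory.
Local Open Scope ring_scope.

Definition posdef (R : realFieldType) (n : nat) (A : 'M[R]_n) : Prop :=
  A^T = A /\ forall x : 'rV[R]_n, x != 0 -> 0 < (x *m A *m x^T) 0 0.

Definition ci_edge (R : realFieldType) (n : nat) (A : 'M[R]_n) : rel 'I_n :=
  fun i j => (i != j) && (invmx A i j != 0).

Definition is_tree (T : finType) (e : rel T) : Prop :=
  (forall x y, connect e x y) /\
  ~ (exists s : seq T, [/\ uniq s, 3 <= size s & path.cycle e s])%N.

Definition degree (T : finType) (e : rel T) (v : T) : nat := #|[set w | e v w]|.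

From HB Require Import structures.
From mathcomp Require Import all_boot all_order all_fingroup all_algebra.
From mathcomp Require Import ring.
Import Order.TTheory GRing.Theory Num.Theory.
Local Open Scope ring_scope.
Set Implicit Arguments. Unset Strict Implicit. Unset Printing Implicit Defensive.

(* Since [a] is a leaf with neighbour [b], row [a] of [Om = S^-1] is supported
   on [{a, b}], so that [S a j = k * S b j] for [j != a] and
   [S a a - 1 / Om a a = k^2 * S b b], with [k = - Om a b / Om a a]: [X_a] is
   [k X_b] plus independent noise of variance [1 / Om a a].  Hence
   [Sq = L S L^T + c E_bb], the covariance of [Y_a = k X_b], [Y_b = X_b + Z]
   with independent [Z] of variance [c], and [Y_j = X_j] otherwise.  This makes
   [Sq] positive definite, and its inverse can be written down explicitly: in
   it [b] is a leaf hanging off [a], which takes over the other neighbours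
   of [b]. *)

Lemma bigD1_pair (V : nmodType) n (a b : 'I_n) (F : 'I_n -> V) : a != b ->
  \sum_i F i = F a + F b + \sum_(i | (i != a) && (i != b)) F i.
Proof.
move=> neq_ab; rewrite (bigD1 a) //= (bigD1 b) 1?eq_sym //= addrA.
by congr (_ + _); apply: eq_bigl => i; rewrite andbC.
Qed.

Lemma degree1_neighbor (T : finType) (e : rel T) (v w u : T) :
  degree e v = 1%N -> e v w -> e v u -> u = w.
Proof.
rewrite /degree => /eqP/cards1P[z Nv] evw evu.
have : w \in [set y | e v y] by rewrite inE.
have : u \in [set y | e v y] by rewrite inE.
by rewrite Nv !inE => /eqP-> /eqP->.
Qed.

Section PositiveDefinite.
Variables (R : realFieldType) (n : nat).
Implicit Types (A L : 'M[R]_n) (x : 'rV[R]_n).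

Lemma quad_form_delta_mx x i : (x *m delta_mx i i *m x^T) 0 0 = x 0 i ^+ 2.
Proof.
rewrite -(mul_delta_mx (0 : 'I_1)) mulmxA -colE -mulmxA -[delta_mx 0 i]trmx_delta.
by rewrite -trmx_mul -colE mxE big_ord1 !mxE expr2.
Qed.

Lemma posdef_diag_gt0 A i : posdef A -> 0 < A i i.
Proof.
move=> [_ A_pos]; have := A_pos 'e_i.
rewrite -mulmxA trmx_delta -colE -rowE !mxE => -> //.
by apply/eqP => /matrixP/(_ 0 i); rewrite !mxE !eqxx => /eqP; rewrite oner_eq0.
Qed.

Lemma posdef_unit A : posdef A -> A \in unitmx.
Proof.
move=> [_ A_pos]; rewrite unitmxE unitfE; apply/negP => /det0P[x x_neq0 xA].
by have := A_pos x x_neq0; rewrite xA mul0mx mxE ltxx.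
Qed.

(* The quadratic form is [(x L) A (x L)^T + c x_i^2]; the kernel condition
   says the two terms cannot vanish together. *)
Lemma posdef_congr_add_delta A L i c :
  posdef A -> 0 < c -> (forall x, x *m L = 0 -> x 0 i = 0 -> x = 0) ->
  posdef (L *m A *m L^T + c *: delta_mx i i).
Proof.
move=> [A_sym A_pos] c_gt0 kerL; split.
  by rewrite linearD linearZ /= trmx_delta !trmx_mul trmxK A_sym mulmxA.
move=> x x_neq0.
rewrite mulmxDr mulmxDl -scalemxAr -scalemxAl mxE [in X in _ + X]mxE.
rewrite quad_form_delta_mx !mulmxA.
have -> : x *m L *m A *m L^T *m x^T = x *m L *m A *m (x *m L)^T.
  by rewrite trmx_mul !mulmxA.
have [xL0|xL_neq0] := eqVneq (x *m L) 0.
  rewrite xL0 !mul0mx mxE add0r mulr_gt0 // lt_def sqr_ge0 andbT sqrf_eq0.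
  by apply: contraNneq x_neq0 => /(kerL x xL0)->.
by apply: (lt_le_trans (A_pos _ xL_neq0)); rewrite lerDl mulr_ge0 ?sqr_ge0 ?ltW.
Qed.

End PositiveDefinite.

Definition leaf_swap (R : comUnitRingType) n (S : 'M[R]_n) (a b : 'I_n) (c : R) :=
  \matrix_(i, j)
    (if (i == a) && (j == a) then S a a - 1 / (invmx S) a a
     else if (i == b) && (j == b) then S b b + c
     else S i j).

Section LeafSwap.
Variables (R : realFieldType) (n : nat) (S : 'M[R]_n) (a b : 'I_n) (c : R).
Local Notation Om := (invmx S).
Hypotheses (S_sym : S^T = S) (S_unit : S \in unitmx).
Hypotheses (neq_ab : a != b) (Om_ab_neq0 : Om a b != 0).
Hypothesis Om_leaf : forall j, j != a -> j != b -> Om a j = 0.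

Let neq_ba : b != a. Proof. by rewrite eq_sym. Qed.

Lemma sym_covE i j : S j i = S i j.
Proof. by rewrite -[in LHS]S_sym mxE. Qed.

Lemma sym_invmxE i j : Om j i = Om i j.
Proof. by rewrite -[in RHS]S_sym -trmx_inv mxE. Qed.

Lemma sum_mulmx_invmx i j : \sum_l S i l * Om l j = (i == j)%:R.
Proof. by have /matrixP/(_ i j) := mulmxV S_unit; rewrite !mxE. Qed.

Lemma sum_invmx_mulmx i j : \sum_l Om i l * S l j = (i == j)%:R.
Proof. by have /matrixP/(_ i j) := mulVmx S_unit; rewrite !mxE. Qed.

Lemma invmx_leaf_row j : Om a a * S a j + Om a b * S b j = (a == j)%:R.
Proof.
rewrite -sum_invmx_mulmx (bigD1_pair _ neq_ab) big1 ?addr0 // => l /andP[la lb].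
by rewrite Om_leaf // mul0r.
Qed.

Lemma invmx_leaf_diag_neq0 : S b b != 0 -> Om a a != 0.
Proof.
apply: contra_neq => Om_aa0; have := invmx_leaf_row b.
rewrite Om_aa0 mul0r add0r (negbTE neq_ab) => /eqP.
by rewrite mulf_eq0 (negbTE Om_ab_neq0) => /eqP.
Qed.

Hypothesis Om_aa_neq0 : Om a a != 0.

Let k := - Om a b / Om a a.

Let k_neq0 : k != 0.
Proof. by rewrite mulf_neq0 ?oppr_eq0 ?invr_eq0. Qed.

Lemma leaf_cov_row j : j != a -> S a j = k * S b j.
Proof.
move=> ja; have := invmx_leaf_row j; rewrite eq_sym (negbTE ja) => /eqP.
by rewrite addr_eq0 => /eqP h; apply: (mulfI Om_aa_neq0); rewrite h /k; field.
Qed.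

Lemma leaf_cov_col i : i != a -> S i a = k * S i b.
Proof. by move=> ia; rewrite sym_covE leaf_cov_row // sym_covE. Qed.

Lemma leaf_cov_diag : S a a = 1 / Om a a + k ^+ 2 * S b b.
Proof.
have := invmx_leaf_row a; rewrite eqxx mulr1n (sym_covE a b) (leaf_cov_row neq_ba) => h.
apply: (mulfI Om_aa_neq0); rewrite -[Om a a * S a a](addrK (Om a b * (k * S b b))) h.
by rewrite /k; field.
Qed.

Definition leaf_lift : 'M[R]_n :=
  \matrix_(i, j) (if i == a then k * (j == b)%:R else (i == j)%:R).

Lemma mul_leaf_lift_mx m (M : 'M[R]_(n, m)) i j :
  (leaf_lift *m M) i j = if i == a then k * M b j else M i j.
Proof.
rewrite mxE; case: ifP => [/eqP->|ia].
  rewrite (bigD1 b) //= big1 ?addr0 => [|l lb]; rewrite !mxE !eqxx.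
    by rewrite mulr1.
  by rewrite (negbTE lb) mulr0 mul0r.
rewrite (bigD1 i) //= big1 ?addr0 => [|l li]; rewrite !mxE ia.
  by rewrite eqxx mul1r.
by rewrite eq_sym (negbTE li) mul0r.
Qed.

Lemma mulmx_tr_leaf_lift m (M : 'M[R]_(m, n)) i j :
  (M *m leaf_lift^T) i j = if j == a then k * M i b else M i j.
Proof. by rewrite -[M]trmxK -trmx_mul mxE mul_leaf_lift_mx !mxE. Qed.

Lemma leaf_swap_decomp :
  leaf_swap S a b c = leaf_lift *m S *m leaf_lift^T + c *: delta_mx b b.
Proof.
apply/matrixP => i j; rewrite [LHS]mxE [RHS]mxE mulmx_tr_leaf_lift !mul_leaf_lift_mx.
rewrite [(c *: delta_mx b b : 'M[R]_n) i j]mxE mxE.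
have [->|ia] := eqVneq i a; [|have [->|ib] := eqVneq i b];
  have [->|ja] := eqVneq j a; try have [->|jb] := eqVneq j b;
  rewrite ?eqxx ?(negbTE neq_ab) ?(negbTE neq_ba) /= ?mulr0 ?mulr1 ?addr0 //.
  by rewrite leaf_cov_diag; ring.
all: by rewrite ?leaf_cov_row ?leaf_cov_col.
Qed.

Lemma mulmx_leaf_lift m (M : 'M[R]_(m, n)) i j :
  (M *m leaf_lift) i j = M i a * (k * (j == b)%:R) + (j != a)%:R * M i j.
Proof.
rewrite mxE (bigD1 a) // mxE eqxx; congr (_ + _).
rewrite (eq_bigr (fun l => M i l * (l == j)%:R)) => [|l /negbTE la]; last first.
  by rewrite mxE la.
have [->|ja] := eqVneq j a.
  by rewrite mul0r big1 // => l /negbTE la; rewrite la mulr0.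
rewrite mul1r (bigD1 j) // eqxx mulr1 big1 => [|l /andP[_ /negbTE lj]]; first exact: addr0.
by rewrite lj mulr0.
Qed.

Lemma leaf_lift_ker (x : 'rV[R]_n) : x *m leaf_lift = 0 -> x 0 b = 0 -> x = 0.
Proof.
move=> /matrixP xL0 xb0.
have xa0 : x 0 a = 0.
  have := xL0 0 b; rewrite mulmx_leaf_lift mxE neq_ba eqxx xb0 mulr1 mulr0 addr0.
  by move/eqP; rewrite mulf_eq0 (negbTE k_neq0) orbF => /eqP.
apply/rowP => j; rewrite mxE.
have [->|ja] := eqVneq j a => //; have [->|jb] := eqVneq j b => //.
by have := xL0 0 j; rewrite mulmx_leaf_lift mxE ja (negbTE jb) !mulr0 add0r mul1r.
Qed.

Lemma posdef_leaf_swap : posdef S -> 0 < c -> posdef (leaf_swap S a b c).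
Proof.
move=> S_pd c_gt0; rewrite leaf_swap_decomp.
exact: posdef_congr_add_delta S_pd c_gt0 leaf_lift_ker.
Qed.

Hypothesis c_neq0 : c != 0.

Definition leaf_swap_inv : 'M[R]_n := \matrix_(i, j)
  if i == a then
    if j == a then (Om b b - Om a b ^+ 2 / Om a a + c^-1) / k ^+ 2
    else if j == b then - (c * k)^-1 else Om b j / k
  else if i == b then
    if j == a then - (c * k)^-1 else if j == b then c^-1 else 0
  else if j == a then Om i b / k else if j == b then 0 else Om i j.

Lemma sum_mulmx_invmx_off_leaf i j :
  \sum_(l | (l != a) && (l != b)) S i l * Om l j
    = (i == j)%:R - S i a * Om a j - S i b * Om b j.
Proof. by rewrite -sum_mulmx_invmx (bigD1_pair _ neq_ab); ring. Qed.

Lemma leaf_swap_mulmx_inv : leaf_swap S a b c *m leaf_swap_inv = 1%:M.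
Proof.
apply/matrixP => i j; rewrite !mxE (bigD1_pair _ neq_ab) !mxE.
rewrite (eq_bigr (fun l => S i l * (if j == a then Om l b / k
                 else if j == b then 0 else Om l j))); last first.
  by move=> l /andP[/negbTE la /negbTE lb]; rewrite !mxE la lb !andbF.
rewrite !eqxx (negbTE neq_ab) (negbTE neq_ba) !andbT !andbF.
have [->|ja] := eqVneq j a; [|have [->|jb] := eqVneq j b]; [
  under eq_bigr => l _ do rewrite mulrA;
  rewrite -mulr_suml sum_mulmx_invmx_off_leaf |
  rewrite big1 => [|l _]; [|exact: mulr0] |
  rewrite sum_mulmx_invmx_off_leaf (Om_leaf ja jb); set d := (i == j)%:R; clearbody d];
by have [->|ia] := eqVneq i a; [|have [->|ib] := eqVneq i b];
  rewrite ?eqxx ?(negbTE neq_ab) ?(negbTE neq_ba) /= ?leaf_cov_diag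
    ?(leaf_cov_row neq_ba) ?leaf_cov_col // /k; field;
  rewrite ?Om_aa_neq0 ?Om_ab_neq0 ?c_neq0.
Qed.

Lemma invmx_leaf_swap : invmx (leaf_swap S a b c) = leaf_swap_inv.
Proof.
have [Sq_unit _] := mulmx1_unit leaf_swap_mulmx_inv.
by rewrite -[RHS](mulKmx Sq_unit) leaf_swap_mulmx_inv mulmx1.
Qed.

Lemma leaf_swap_inv_eq0 i j : i != j ->
  (leaf_swap_inv i j == 0) = (Om (tperm a b i) (tperm a b j) == 0).
Proof.
have Oab_neq0 : - (c * k)^-1 != 0 by rewrite oppr_eq0 invr_eq0 mulf_neq0.
rewrite mxE.
have [<-|ai] := eqVneq a i; [|have [<-|bi] := eqVneq b i];
  have [<-|aj] := eqVneq a j; try have [<-|bj] := eqVneq b j;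
  rewrite ?eqxx ?(negbTE neq_ab) ?(negbTE neq_ba) ?tpermL ?tpermR ?tpermD //= => _.
- by rewrite (sym_invmxE a b) (negbTE Oab_neq0) (negbTE Om_ab_neq0).
- by rewrite mulf_eq0 invr_eq0 (negbTE k_neq0) orbF.
- by rewrite (negbTE Oab_neq0) (negbTE Om_ab_neq0).
- by rewrite Om_leaf ?eqxx // eq_sym.
- by rewrite mulf_eq0 invr_eq0 (negbTE k_neq0) orbF.
- by rewrite (sym_invmxE a i) Om_leaf ?eqxx // eq_sym.
Qed.

Lemma ci_edge_leaf_swap i j :
  ci_edge (leaf_swap S a b c) i j = ci_edge S (tperm a b i) (tperm a b j).
Proof.
rewrite /ci_edge invmx_leaf_swap (inj_eq perm_inj).
by have [//|neq_ij] := eqVneq i j; rewrite /= leaf_swap_inv_eq0.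
Qed.

End LeafSwap.

Theorem proposition1 (R : realFieldType) (n : nat) (S D : 'M[R]_n)
    (a b : 'I_n) (c : R) :
  posdef S ->
  is_tree (ci_edge S) ->
  is_diag_mx D -> (forall i, 0 <= D i i) ->
  degree (ci_edge S) a = 1%N -> ci_edge S a b ->
  0 < c -> c < D b b ->
  let Sq := \matrix_(i, j)
      (if (i == a) && (j == a) then S a a - 1 / (invmx S) a a
       else if (i == b) && (j == b) then S b b + c
       else S i j) in
  posdef Sq /\
  (forall i j, ci_edge Sq i j = ci_edge S (tperm a b i) (tperm a b j)).
Proof.
move=> S_pd _ _ _ deg_a edge_ab c_gt0 _ Sq; rewrite /Sq -/(leaf_swap S a b c).
have [neq_ab Om_ab_neq0] := andP edge_ab.
have S_unit := posdef_unit S_pd.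
have [S_sym _] := S_pd.
have Om_leaf j : j != a -> j != b -> invmx S a j = 0.
  move=> ja jb; apply/eqP; apply: contraNT jb => Om_aj_neq0.
  by apply/eqP; apply: (degree1_neighbor deg_a edge_ab); rewrite /ci_edge eq_sym ja.
have Om_aa_neq0 : invmx S a a != 0.
  by apply: (invmx_leaf_diag_neq0 (b := b)) => //; rewrite gt_eqF ?posdef_diag_gt0.
split; first exact: posdef_leaf_swap.
by apply: ci_edge_leaf_swap => //; rewrite gt_eqF.
Qed.
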